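(* Let $n\ge1$, $p$ a prime, $R,S\subset E_n$, and let $\mathcal{C}=\{x\in\mathbb{Z}^n:F^{(i)}_{T^{(i)}}(x)\le0\ \forall i\in S\}$ be the $S$-adapted $p$-cone attached to a family $(T^{(i)})_{i\in S}$. Then $\mathcal{C}_{\mathsf{pHa},S}\subset\mathcal{C}$ if and only if $\mathcal{C}$ is Hasse-admissible and positive.
   Context: $E_n=\{1,\dots,n\}$, indices mod $n$; $e_i$ standard basis ($e_0=e_n$). $\delta_U^{(i)}=-1$ if $i\in U$, else $1$. $F^{(d)}_T(x)=\sum_{i=0}^{n-1}p^i\delta_T^{(d+i)}x_{d+i}$. Saturation of a submonoid $A\subset\mathbb{Z}^n$: $\{x:mx\in A\text{ for some }m\ge1\}$. $\mathsf{ha}^{(i)}_{R,S}=-\delta_S^{(i)}e_i-p\delta_R^{(i-1)}e_{i-1}$; $\mathcal{C}_{\mathsf{pHa},S}$ is the saturation of $\sum_{i\in S}\mathbb{N}\mathsf{ha}^{(i)}_{R,S}+\sum_{i\notin S}\mathbb{Z}\mathsf{ha}^{(i)}_{R,S}$. $T$ is $(R,S)$-admissible if for each $i$ with $i+1\notin S$: if $i\notin R$ exactly one of $i,i+1$ lies in $T$, if $i\in R$ both or neither lie in $T$. $T$ is $j$-positive if ($j-1\in T\iff j-1\in R$). $T$ is Hasse-admissible if it is $(R,S)$-admissible and $j$-positive for every $j\in S\setminus T$. $\mathcal{C}$ is Hasse-admissible if every $T^{(i)}$ is, and positive if every $T^{(i)}$ is $i$-positive. *)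

From mathcomp Require Import all_boot all_order all_algebra.
Set Implicit Arguments. Unset Strict Implicit. Unset Printing Implicit Defensive.
Import Order.TTheory GRing.Theory Num.Theory.
Local Open Scope ring_scope.

(* E_n = {1,...,n} is modelled by 'I_n via k |-> k mod n (so n corresponds to
   ordinal 0, matching e_0 = e_n).  Indices are natural numbers read mod n. *)

Section Defs.
Variable n : nat.

Definition memE (U : {set 'I_n}) (i : nat) : bool :=
  [exists k in U, val k == (i %% n)%N].

Definition delta (U : {set 'I_n}) (i : nat) : int := if memE U i then -1 else 1.

Definition xat (x : 'I_n -> int) (i : nat) : int :=
  odflt 0 (omap x (insub (i %% n)%N : option 'I_n)).

Definition predE (i : nat) : nat := (i + n - 1)%N.

Variable p : nat.

Definition Fp (d : nat) (T : {set 'I_n}) (x : 'I_n -> int) : int :=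
  \sum_(i < n) (p%:Z) ^+ i * delta T (d + i) * xat x (d + i).

Definition in_pcone (S : {set 'I_n}) (T : 'I_n -> {set 'I_n})
  (x : 'I_n -> int) : Prop :=
  forall i : 'I_n, i \in S -> Fp (val i) (T i) x <= 0.

Definition ha (R S : {set 'I_n}) (i : 'I_n) (k : 'I_n) : int :=
  (if val k == (val i %% n)%N then - delta S (val i) else 0)
  + (if val k == (predE (val i) %% n)%N
     then - (p%:Z * delta R (predE (val i))) else 0).

Definition in_haMonoid (R S : {set 'I_n}) (y : 'I_n -> int) : Prop :=
  exists c : 'I_n -> int,
    (forall i, i \in S -> 0 <= c i) /\
    (forall k, y k = \sum_(i < n) c i * ha R S i k).

Definition in_CpHa (R S : {set 'I_n}) (x : 'I_n -> int) : Prop :=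
  exists m : nat, (0 < m)%N /\ in_haMonoid R S (fun k => (m%:Z) * x k).

Definition RS_admissible (R S T : {set 'I_n}) : Prop :=
  forall i : nat, (1 <= i <= n)%N -> ~~ memE S i.+1 ->
    (~~ memE R i -> (memE T i (+) memE T i.+1)) /\
    (memE R i -> (memE T i == memE T i.+1)).

Definition j_positive (R T : {set 'I_n}) (j : nat) : Prop :=
  memE T (predE j) = memE R (predE j).

Definition Hasse_admissible (R S T : {set 'I_n}) : Prop :=
  RS_admissible R S T /\
  (forall j : 'I_n, j \in S -> j \notin T -> j_positive R T (val j)).

Definition cone_Hasse_admissible (R S : {set 'I_n}) (T : 'I_n -> {set 'I_n})
  : Prop := forall i, i \in S -> Hasse_admissible R S (T i).

Definition cone_positive (R S : {set 'I_n}) (T : 'I_n -> {set 'I_n}) : Prop :=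
  forall i, i \in S -> j_positive R (T i) (val i).

End Defs.

From mathcomp Require Import all_boot all_order all_algebra.
From mathcomp Require Import zify ring.
Set Implicit Arguments. Unset Strict Implicit. Unset Printing Implicit Defensive.
Import Order.TTheory GRing.Theory Num.Theory.
Local Open Scope ring_scope.

(* [F^(d)_T] is linear and [p > 0], so the saturated cone [C_pHa,S] lies in the
   half-space [F^(d)_T <= 0] iff its generators do: [F^(d)_T(ha^(j)) <= 0] for
   every [j], with equality when [j] is not in [S], since then [-ha^(j)] is a
   generator too.  For [j <> d] the value [F^(d)_T(ha^(j))] is
   [-Q (delta_T^(j) delta_S^(j) + delta_T^(j-1) delta_R^(j-1))] with [Q > 0], a
   sum of two signs; for [j = d] it is [delta_T^(d) - p^n delta_T^(d-1) delta_R^(d-1)],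
   whose sign is that of the second term.  These sign conditions are exactly
   (R,S)-admissibility (from [j] not in [S]), the positivity clause of
   Hasse-admissibility (from [j] in [S] but not in [T]) and [d]-positivity
   (from [j = d]). *)

Section PCone.
Variables (n p : nat).
Hypothesis n_gt0 : (0 < n)%N.

Lemma memE_mod (U : {set 'I_n}) m1 m2 :
  (m1 %% n = m2 %% n)%N -> memE U m1 = memE U m2.
Proof. by rewrite /memE => ->. Qed.

Lemma delta_mod (U : {set 'I_n}) m1 m2 :
  (m1 %% n = m2 %% n)%N -> delta U m1 = delta U m2.
Proof. by move=> e; rewrite /delta (memE_mod U e). Qed.

Lemma memE_ord (U : {set 'I_n}) (k : 'I_n) : memE U k = (k \in U).
Proof.
rewrite /memE (modn_small (ltn_ord k)).
apply/existsP/idP => [[k' /andP[k'U /eqP/val_inj <-]] // | kU].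
by exists k; rewrite kU eqxx.
Qed.

Lemma delta_mul (A B : {set 'I_n}) m m' :
  delta A m * delta B m' = if memE A m (+) memE B m' then -1 else 1.
Proof. by rewrite /delta; case: (memE A m); case: (memE B m'). Qed.

Lemma succ_predE_mod j : ((predE n j).+1 %% n = j %% n)%N.
Proof. by rewrite /predE (_ : (j + n - 1).+1 = j + n)%N ?modnDr //; lia. Qed.

Lemma predE_succ_mod i : (predE n (i.+1 %% n) %% n = i %% n)%N.
Proof.
rewrite /predE (_ : (i.+1 %% n + n - 1 = i.+1 %% n + n.-1)%N); last by lia.
by rewrite modnDml (_ : (i.+1 + n.-1 = i + n)%N) ?modnDr //; lia.
Qed.

Lemma residue_in_1n m : exists2 i, (1 <= i <= n)%N & (i %% n = m %% n)%N.
Proof.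
case: (posnP (m %% n)) => [m0 | m_gt0].
  by exists n; rewrite ?n_gt0 ?leqnn ?modnn ?m0.
by exists (m %% n)%N; rewrite ?modn_mod // m_gt0 ltnW // ltn_mod.
Qed.

Lemma eq_xat (x y : 'I_n -> int) m : x =1 y -> xat x m = xat y m.
Proof. by move=> e; rewrite /xat; case: (insub _) => //= k; rewrite e. Qed.

Lemma xatD (x y : 'I_n -> int) m : xat (fun k => x k + y k) m = xat x m + xat y m.
Proof. by rewrite /xat; case: (insub _) => //=; rewrite addr0. Qed.

Lemma xatZ a (x : 'I_n -> int) m : xat (fun k => a * x k) m = a * xat x m.
Proof. by rewrite /xat; case: (insub _) => //=; rewrite mulr0. Qed.

Lemma xat_sum (f : 'I_n -> 'I_n -> int) m :
  xat (fun k => \sum_(i < n) f i k) m = \sum_(i < n) xat (f i) m.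
Proof. by rewrite /xat; case: (insub _) => //=; rewrite big1. Qed.

Lemma xat_unit u (a : int) m :
  xat (fun k : 'I_n => if val k == (u %% n)%N then a else 0) m =
  if (m %% n == u %% n)%N then a else 0.
Proof. by rewrite /xat; case: insubP => [k _ /= -> | ] //=; rewrite ltn_pmod. Qed.

Lemma eq_Fp d T (x y : 'I_n -> int) : x =1 y -> Fp p d T x = Fp p d T y.
Proof. by move=> e; apply: eq_bigr => i _; rewrite (eq_xat _ e). Qed.

Lemma FpD d T (x y : 'I_n -> int) :
  Fp p d T (fun k => x k + y k) = Fp p d T x + Fp p d T y.
Proof. by rewrite /Fp -big_split; apply: eq_bigr => i _; rewrite xatD mulrDr. Qed.

Lemma FpZ d T a (x : 'I_n -> int) : Fp p d T (fun k => a * x k) = a * Fp p d T x.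
Proof. by rewrite /Fp mulr_sumr; apply: eq_bigr => i _; rewrite xatZ; ring. Qed.

Lemma Fp_sum d T (f : 'I_n -> 'I_n -> int) :
  Fp p d T (fun k => \sum_(i < n) f i k) = \sum_(i < n) Fp p d T (f i).
Proof.
by rewrite /Fp; under eq_bigr do rewrite xat_sum mulr_sumr; exact: exchange_big.
Qed.

Lemma Fp_unit d T u e (a : int) : (e < n)%N -> ((d + e) %% n = u %% n)%N ->
  Fp p d T (fun k : 'I_n => if val k == (u %% n)%N then a else 0) =
  p%:Z ^+ e * delta T u * a.
Proof.
move=> e_lt de_u; rewrite /Fp (bigD1 (Ordinal e_lt)) //= big1 ?addr0.
  by rewrite xat_unit de_u eqxx (delta_mod T de_u).
move=> i /eqP i_ne; rewrite xat_unit; case: eqP => [de_i | _]; last by rewrite mulr0.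
have : (d + i == d + e %[mod n])%N by rewrite de_i de_u.
by rewrite eqn_modDl !modn_small // => /eqP i_e; case: i_ne; apply: val_inj.
Qed.

(* [p ^+ Fexp d j] and [p ^+ Fexp_pred d j] are the weights of the coordinates
   [j] and [j - 1] in [F^(d)]. *)
Definition Fexp (d j : nat) : nat := if (d <= j)%N then (j - d)%N else (j + n - d)%N.
Definition Fexp_pred (d j : nat) : nat := if j == d then n.-1 else (Fexp d j).-1.

Definition Fha (R S T : {set 'I_n}) (d j : 'I_n) : int := Fp p d T (ha p R S j).

Lemma Fha_expand (R S T : {set 'I_n}) (d j : 'I_n) :
  Fha R S T d j = p%:Z ^+ Fexp d j * delta T j * - delta S j
    + p%:Z ^+ Fexp_pred d j * delta T (predE n j) * - (p%:Z * delta R (predE n j)).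
Proof.
case: d j => d d_lt [j j_lt]; rewrite /Fha /ha /= FpD.
have mod_eq x y : (x = y \/ x = y + n \/ y = x + n)%N -> (x %% n = y %% n)%N.
  by case=> [-> | [-> | ->]]; rewrite ?modnDr.
rewrite (@Fp_unit _ _ _ (Fexp d j)); first last.
- by apply: mod_eq; rewrite /Fexp; case: ifP; lia.
- by rewrite /Fexp; case: ifP; lia.
rewrite (@Fp_unit _ _ _ (Fexp_pred d j)) //.
- by rewrite /Fexp_pred /Fexp; case: eqP; try case: ifP; lia.
- by apply: mod_eq; rewrite /Fexp_pred /Fexp /predE; case: eqP; try case: ifP; lia.
Qed.

Hypothesis p_gt1 : (1 < p)%N.

Lemma Fha_offdiag (R S T : {set 'I_n}) (d j : 'I_n) : j != d ->
  exists2 Q : int, 0 < Q & Fha R S T d j =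
    - (Q * (delta T j * delta S j + delta T (predE n j) * delta R (predE n j))).
Proof.
move=> /eqP j_ne_d.
have Fexp_succ : Fexp d j = (Fexp_pred d j).+1.
  have := ltn_ord d; rewrite /Fexp_pred /Fexp.
  by case: eqP => [/val_inj/j_ne_d [] | ?]; case: ifP; lia.
have p_gt0 : 0 < p%:Z by rewrite ltz_nat ltnW.
exists (p%:Z ^+ Fexp_pred d j * p%:Z); first exact: mulr_gt0 (exprn_gt0 _ p_gt0) p_gt0.
by rewrite Fha_expand Fexp_succ exprSr; ring.
Qed.

Lemma Fha_diag (R S T : {set 'I_n}) (d : 'I_n) : d \in S ->
  exists2 Q : int, 1 < Q &
    Fha R S T d d = delta T d - Q * (delta T (predE n d) * delta R (predE n d)).
Proof.
move=> dS; have p_gt1' : 1 < p%:Z by rewrite ltz_nat.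
exists (p%:Z ^+ n.-1 * p%:Z); first by have := exprn_ege1 n.-1 (ltW p_gt1'); nia.
have Fexp_dd : Fexp d d = 0%N by rewrite /Fexp leqnn subnn.
have deltaS_d : delta S d = -1 by rewrite /delta memE_ord dS.
by rewrite Fha_expand Fexp_dd deltaS_d /Fexp_pred eqxx expr0; ring.
Qed.

(* For [j] outside [S], both [ha^(j)] and [-ha^(j)] are generators. *)
Definition ha_gen_in_halfspace (R S T : {set 'I_n}) (d j : 'I_n) : bool :=
  (Fha R S T d j <= 0) && ((j \notin S) ==> (Fha R S T d j == 0)).

Lemma sign_sum_ge0 (b c : bool) :
  (0 <= (if b then -1 else 1) + (if c then -1 else 1) :> int) = ~~ (b && c).
Proof. by case: b; case: c. Qed.

Lemma sign_sum_eq0 (b c : bool) :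
  ((if b then -1 else 1) + (if c then -1 else 1) == 0 :> int) = b (+) c.
Proof. by case: b; case: c. Qed.

Lemma ha_gen_offdiag (R S T : {set 'I_n}) (d j : 'I_n) : j != d ->
  ha_gen_in_halfspace R S T d j =
  let sT := (j \in T) (+) (j \in S) in
  let sR := memE T (predE n j) (+) memE R (predE n j) in
  ~~ (sT && sR) && ((j \notin S) ==> (sT (+) sR)).
Proof.
move=> j_ne_d; rewrite /ha_gen_in_halfspace.
have [Q Q_gt0 ->] := Fha_offdiag R S T j_ne_d.
by rewrite oppr_le0 pmulr_rge0 // oppr_eq0 mulf_eq0 gt_eqF //=
  !delta_mul sign_sum_ge0 sign_sum_eq0 !memE_ord.
Qed.

Lemma ha_gen_diag (R S T : {set 'I_n}) (d : 'I_n) : d \in S ->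
  ha_gen_in_halfspace R S T d d <-> j_positive R T d.
Proof.
move=> dS; rewrite /ha_gen_in_halfspace dS andbT.
have [Q Q_gt1 ->] := Fha_diag R T dS.
rewrite delta_mul /j_positive /delta memE_ord.
by case: (d \in T); case: (memE T _); case: (memE R _); split=> //= h; lia.
Qed.

Lemma admissible_step (r t t' : bool) :
  ((~~ r -> t (+) t') /\ (r -> t == t')) <-> t' = ~~ (t (+) r).
Proof.
split=> [[h1 h2] | ->]; last by case: r; case: t.
by case: r h1 h2 => [_ /(_ isT) | /(_ isT) + _]; case: t; case: t'.
Qed.

Lemma RS_admissibleE (R S T : {set 'I_n}) :
  RS_admissible R S T <->
  forall j : 'I_n, j \notin S ->
    (j \in T) = ~~ (memE T (predE n j) (+) memE R (predE n j)).
Proof.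
split=> [adm j jS | adm i i_1n iS].
- have [i i_1n i_pred] := residue_in_1n (predE n j).
  have memE_i (X : {set 'I_n}) : memE X i = memE X (predE n j) := memE_mod X i_pred.
  have memE_Si (X : {set 'I_n}) : memE X i.+1 = (j \in X).
    rewrite -memE_ord; apply: memE_mod.
    by rewrite -addn1 -modnDml i_pred modnDml addn1 succ_predE_mod.
  by have := adm i i_1n; rewrite !memE_i !memE_Si => /(_ jS) /admissible_step.
- pose j := Ordinal (ltn_pmod i.+1 n_gt0).
  have memE_j (X : {set 'I_n}) : (j \in X) = memE X i.+1.
    by rewrite -memE_ord; apply: memE_mod; rewrite modn_mod.
  have memE_pj (X : {set 'I_n}) : memE X (predE n j) = memE X i.
    by apply: memE_mod; rewrite predE_succ_mod.
  apply/admissible_step; have := adm j; rewrite !memE_j !memE_pj; exact.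
Qed.

Lemma ha_gens_in_halfspace_iff (R S T : {set 'I_n}) (d : 'I_n) : d \in S ->
  (forall j, ha_gen_in_halfspace R S T d j) <->
  Hasse_admissible R S T /\ j_positive R T d.
Proof.
move=> dS; split=> [gens | [[adm pos_notin] pos_d] j].
- have pos_d : j_positive R T d by apply/(ha_gen_diag R T dS).
  split=> //; split.
  + apply/RS_admissibleE => j jS.
    have j_ne_d : j != d by apply: contraNneq jS => ->.
    have := gens j; rewrite ha_gen_offdiag // (negbTE jS) /=.
    by case: (j \in T); case: (memE T _); case: (memE R _).
  + move=> j jS jT; case: (eqVneq j d) => [-> // | j_ne_d].
    have := gens j; rewrite ha_gen_offdiag // jS (negbTE jT) /j_positive /=.
    by case: (memE T _); case: (memE R _).
- case: (eqVneq j d) => [-> | j_ne_d]; first exact/(ha_gen_diag R T dS).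
  rewrite ha_gen_offdiag //; case: (boolP (j \in S)) => jS /=.
  + case: (boolP (j \in T)) => jT //=.
    by rewrite (pos_notin j jS jT) addbb.
  + rewrite ((RS_admissibleE R S T).1 adm j jS).
    by case: (memE T _); case: (memE R _).
Qed.

Lemma scaled_ha_in_CpHa (R S : {set 'I_n}) (a : int) (j : 'I_n) :
  (j \in S -> 0 <= a) -> in_CpHa p R S (fun k => a * ha p R S j k).
Proof.
move=> a_ge0; exists 1%N; split=> //; exists (fun i => if i == j then a else 0).
split=> [i iS | k]; first by case: eqP => [i_j | //]; apply: a_ge0; rewrite -i_j.
rewrite mul1r (bigD1 j) //= eqxx big1 ?addr0 // => i /negbTE ->.
by rewrite mul0r.
Qed.

Lemma Fp_ha_combination (R S T : {set 'I_n}) (d : 'I_n) (c : 'I_n -> int) :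
  Fp p d T (fun k => \sum_(i < n) c i * ha p R S i k) =
  \sum_(i < n) c i * Fha R S T d i.
Proof.
rewrite (Fp_sum _ _ (fun i k => c i * ha p R S i k)).
by apply: eq_bigr => i _; rewrite FpZ.
Qed.

Lemma CpHa_sub_pcone_iff (R S : {set 'I_n}) (T : 'I_n -> {set 'I_n}) :
  (forall x, in_CpHa p R S x -> in_pcone p S T x) <->
  (forall d, d \in S -> forall j, ha_gen_in_halfspace R S (T d) d j).
Proof.
split=> [sub d dS j | gens x [m [m_gt0 [c [c_ge0 mx]]]] d dS].
- have Fha_le0 : Fha R S (T d) d j <= 0.
    have := sub _ (@scaled_ha_in_CpHa R S 1 j (fun _ => ler01)) d dS.
    by rewrite FpZ mul1r.
  rewrite /ha_gen_in_halfspace Fha_le0 /=; apply/implyP => jS.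
  have opp_ha : in_CpHa p R S (fun k => -1 * ha p R S j k).
    by apply: scaled_ha_in_CpHa; rewrite (negbTE jS).
  have := sub _ opp_ha d dS; rewrite FpZ mulN1r oppr_le0 => Fha_ge0.
  by rewrite eq_le Fha_le0.
- have m_Fp : m%:Z * Fp p d (T d) x = \sum_(i < n) c i * Fha R S (T d) d i.
    by rewrite -FpZ -Fp_ha_combination; apply: eq_Fp.
  have : \sum_(i < n) c i * Fha R S (T d) d i <= 0.
    apply: sumr_le0 => i _; have /andP[Fha_le0 /implyP Fha_eq0] := gens d dS i.
    case: (boolP (i \in S)) => iS; first exact: mulr_ge0_le0 (c_ge0 i iS) Fha_le0.
    by rewrite (eqP (Fha_eq0 iS)) mulr0.
  by rewrite -m_Fp pmulr_rle0 // ltz_nat.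
Qed.

End PCone.

Theorem mainTheorem9 (n p : nat) (hn : (1 <= n)%N) (hp : prime p)
  (R S : {set 'I_n}) (T : 'I_n -> {set 'I_n}) :
  (forall x : 'I_n -> int, in_CpHa p R S x -> in_pcone p S T x) <->
  (cone_Hasse_admissible R S T /\ cone_positive R S T).
Proof.
have halfspace_iff d := @ha_gens_in_halfspace_iff n p hn (prime_gt1 hp) R S (T d) d.
apply: (iff_trans (CpHa_sub_pcone_iff p R S T)).
split=> [gens | [adm pos] d dS].
- by split=> d dS; have [] := (halfspace_iff _ dS).1 (gens d dS).
- by apply/(halfspace_iff d dS); split; [exact: adm | exact: pos].
Qed.
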